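(* Let $A$ be a finitely generated associative $\mathbb{C}$-algebra which is NC-nilpotent, let $\pi:A\to A/M_2(A)$ be the quotient map, let $\bar S\subset A/M_2(A)$ be a finitely generated multiplicative set without zero divisors, and let $S=\pi^{-1}(\bar S)$. Then (1) $S$ satisfies the Ore condition; (2) the Ore localization $A[S^{-1}]$ is finitely generated; (3) $A[S^{-1}]$ is NC-nilpotent.
   Context: $L_1=A$, $L_k=[A,L_{k-1}]$, $M_k=AL_kA$. An algebra is NC-nilpotent if its NC-filtration $F_k=\sum_{m\ge1}\sum_{i_1+\cdots+i_m=k+m}M_{i_1}\cdots M_{i_m}$ satisfies $F_N=0$ for some $N$; for finitely generated algebras this is equivalent to $M_N=0$ for some $N$. *)

From HB Require Import structures.
From mathcomp Require Import all_boot all_order all_algebra.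
From mathcomp Require Import Rstruct complex.
Set Implicit Arguments.
Unset Strict Implicit.
Unset Printing Implicit Defensive.
Import GRing.Theory.
Local Open Scope ring_scope.

Definition CC : fieldType := complex Rdefinitions.R.

Section NCDefs.
Variable A : algType CC.

Inductive span (P : A -> Prop) : A -> Prop :=
| span0 : span P 0
| span_base x : P x -> span P x
| spanD x y : span P x -> span P y -> span P (x + y)
| spanZ (c : CC) x : span P x -> span P (c *: x).

(* L_1 = A, L_k = [A, L_{k-1}] (span of commutators); L_0 is unused. *)
Fixpoint Lser (k : nat) : A -> Prop :=
  match k with
  | 0 => fun _ => True
  | 1 => fun _ => True
  | k'.+1 => span (fun x => exists a l, Lser k' l /\ x = a * l - l * a)
  end.

Definition Mser (k : nat) : A -> Prop :=
  span (fun x => exists a l b, Lser k l /\ x = a * l * b).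

(* NC-filtration: F_k = sum_{m>=1} sum_{i_1+..+i_m = k+m} M_{i_1} ... M_{i_m},
   with all i_j >= 1.  A product of subspaces is the span of the products. *)
Definition NCfil (k : nat) : A -> Prop :=
  span (fun x => exists s : seq (nat * A),
           (0 < size s)%N /\
           all (fun p => 0 < p.1)%N s /\
           sumn (map fst s) = (k + size s)%N /\
           (forall p, p \in s -> Mser p.1 p.2) /\
           x = \prod_(p <- s) p.2).

Definition NC_nilpotent : Prop := exists N : nat, forall x, NCfil N x -> x = 0.

Definition fin_gen_alg : Prop :=
  exists gens : seq A, forall x,
    span (fun y => exists w : seq A, {subset w <= gens} /\ y = \prod_(g <- w) g) x.

Definition right_ore (S : A -> Prop) : Prop :=
  forall a s, S s -> exists b t, S t /\ a * t = s * b.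
Definition left_ore (S : A -> Prop) : Prop :=
  forall a s, S s -> exists b t, S t /\ t * a = b * s.

End NCDefs.

Definition invertible (R : pzRingType) (x : R) : Prop :=
  exists y, x * y = 1 /\ y * x = 1.

Definition is_localization (A B : algType CC) (S : A -> Prop)
    (phi : {lrmorphism A -> B}) : Prop :=
  (forall s, S s -> invertible (phi s)) /\
  forall (C : algType CC) (f : {lrmorphism A -> C}),
    (forall s, S s -> invertible (f s)) ->
    (exists g : {lrmorphism B -> C}, forall a, g (phi a) = f a) /\
    (forall g1 g2 : {lrmorphism B -> C},
        (forall a, g1 (phi a) = f a) -> (forall a, g2 (phi a) = f a) ->
        forall b, g1 b = g2 b).

(* Since F_N(A) = 0 and ad_s^k x lies in F_k(A), every inner derivation ad_s is nilpotent
   of order N.  This gives the Ore conditions, in the form x s^N = s y and s^N x = y' s, and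
   makes it possible to invert a single element t by right fractions a t^-n.  Take for t a
   lift of the product of the generators of Sbar: as A/M_2(A) is commutative, every s in S
   divides a power of t on both sides modulo M_2(A), which lies in F_1(A); since m t^-n is
   nilpotent in A[t^-1] for m in F_1(A), every s in S becomes invertible and A[t^-1] is the
   localization A[S^-1].  Finally, the fractions with numerator in F_k(A) form a filtration
   of A[t^-1] in which commutators raise the degree ([a, t^-1] = t^-1 [t, a] t^-1), so it
   contains the NC-filtration of A[t^-1], which therefore vanishes in degree N. *)

From Pilot Require Import Defs.
From HB Require Import structures.
From mathcomp Require Import all_boot all_order all_algebra zify.
From Stdlib Require Import ClassicalEpsilon.
Set Implicit Arguments.
Unset Strict Implicit.
Unset Printing Implicit Defensive.
Import GRing.Theory.
Local Open Scope ring_scope.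
Local Notation span := Defs.span.

Section Adjoint.
Variable R : pzRingType.
Implicit Types s x y : R.

Definition ad s x := s * x - x * s.

Lemma ad0 s : ad s 0 = 0.
Proof. by rewrite /ad mulr0 mul0r subrr. Qed.

Lemma adD s x y : ad s (x + y) = ad s x + ad s y.
Proof. by rewrite /ad mulrDr mulrDl opprD addrACA. Qed.

Lemma adMr s x y : ad s (x * y) = ad s x * y + x * ad s y.
Proof. by rewrite /ad mulrBl mulrBr !mulrA subrKA. Qed.

Lemma adMl x y s : ad (x * y) s = x * ad y s + ad x s * y.
Proof. by rewrite /ad mulrBr mulrBl !mulrA subrKA. Qed.

Lemma ad1l x : ad 1 x = 0.
Proof. by rewrite /ad mul1r mulr1 subrr. Qed.

Lemma ad1r s : ad s 1 = 0.
Proof. by rewrite /ad mul1r mulr1 subrr. Qed.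

Lemma ad_mull s y : ad s (s * y) = s * ad s y.
Proof. by rewrite /ad mulrBr !mulrA. Qed.

Fixpoint ad_quotr s n x := if n is n'.+1 then x * s ^+ n' - ad_quotr s n' (ad s x) else 0.
Fixpoint ad_quotl s n x := if n is n'.+1 then s ^+ n' * x + ad_quotl s n' (ad s x) else 0.

Lemma mulrX_ad_quotr s n x : iter n (ad s) x = 0 -> x * s ^+ n = s * ad_quotr s n x.
Proof.
elim: n x => [|n IHn] x; first by move=> /= ->; rewrite mul0r mulr0.
rewrite iterSr => adn_x; rewrite exprS mulrA.
have -> : x * s = s * x - ad s x by rewrite /ad opprB subrKC.
by rewrite mulrBl (IHn _ adn_x) -mulrA mulrBr.
Qed.

Lemma mulXr_ad_quotl s n x : iter n (ad s) x = 0 -> s ^+ n * x = ad_quotl s n x * s.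
Proof.
elim: n x => [|n IHn] x; first by move=> /= ->; rewrite mul0r mulr0.
rewrite iterSr => adn_x; rewrite exprSr -mulrA.
have -> : s * x = x * s + ad s x by rewrite /ad subrKC.
by rewrite mulrDr (IHn _ adn_x) !mulrA mulrDl.
Qed.

Lemma ad_nil_mulrX_eq0 s n y : s * y = 0 -> iter n (ad s) y = 0 -> y * s ^+ n = 0.
Proof.
elim: n y => [|n IHn] y sy0; first by move=> /= ->; rewrite mul0r.
rewrite iterSr => adn_y; rewrite exprS mulrA.
have -> : y * s = s * y - ad s y by rewrite /ad opprB subrKC.
by rewrite sy0 sub0r mulNr IHn ?oppr0 // -ad_mull sy0 ad0.
Qed.

End Adjoint.

Section InverseFacts.
Variable R : pzRingType.
Implicit Types v w e : R.

Lemma exprMX_eq1 v w k : v * w = 1 -> v ^+ k * w ^+ k = 1.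
Proof.
move=> vw1; elim: k => [|k IHk]; first by rewrite !expr0 mulr1.
by rewrite exprS exprSr mulrA -(mulrA v) IHk mulr1.
Qed.

Lemma linv_eq_rinv v w1 w2 : w1 * v = 1 -> v * w2 = 1 -> w1 = w2.
Proof. by move=> w1v vw2; rewrite -[w1]mulr1 -vw2 mulrA w1v mul1r. Qed.

Lemma nilpotent_subr_inv e n : e ^+ n = 0 ->
  (1 - e) * \sum_(i < n) e ^+ i = 1 /\ (\sum_(i < n) e ^+ i) * (1 - e) = 1.
Proof.
move=> en0; have inv_r : (1 - e) * \sum_(i < n) e ^+ i = 1.
  by rewrite -opprB mulNr -subrX1 en0 sub0r opprK.
split=> //; rewrite -[RHS]inv_r; apply: commrB; first exact: commr1.
by apply/commr_sym/commr_sum => i _; apply/commrX/commr_refl.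
Qed.

End InverseFacts.

Section Span.
Variable A : algType CC.
Implicit Types P : A -> Prop.

Lemma spanN P x : span P x -> span P (- x).
Proof. by move=> Px; rewrite -scaleN1r; apply: spanZ. Qed.

Lemma spanB P x y : span P x -> span P y -> span P (x - y).
Proof. by move=> Px Py; apply: spanD => //; apply: spanN. Qed.

Lemma span_linear (B : algType CC) P (Q : B -> Prop) (f : A -> B) :
  f 0 = 0 -> (forall x y, f (x + y) = f x + f y) -> (forall c x, f (c *: x) = c *: f x) ->
  (forall x, P x -> span Q (f x)) -> forall x, span P x -> span Q (f x).
Proof.
move=> f0 fD fZ PQ x; elim=> [|y /PQ //|y z _ Qy _ Qz|c y _ Qy].
- by rewrite f0; apply: span0.
- by rewrite fD; apply: spanD.
- by rewrite fZ; apply: spanZ.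
Qed.

Lemma span_lrmorph (B : algType CC) (h : {lrmorphism A -> B}) P (Q : B -> Prop) :
  (forall x, P x -> span Q (h x)) -> forall x, span P x -> span Q (h x).
Proof. by apply: span_linear => [|x y|c x]; rewrite ?rmorph0 ?rmorphD ?linearZ. Qed.

Lemma span_mul P P' Q :
  (forall x y, P x -> P' y -> span Q (x * y)) ->
  forall x y, span P x -> span P' y -> span Q (x * y).
Proof.
move=> PQ x y Px P'y.
apply: (@span_linear A P Q (fun x => x * y)) => // [|u v|c u|u Pu];
  rewrite ?mul0r ?mulrDl -?scalerAl //.
apply: (@span_linear A P' Q (fun y => u * y)) => // [|v w|c v|v P'v];
  rewrite ?mulr0 ?mulrDr -?scalerAr //.
exact: PQ.
Qed.

End Span.

Section NCFiltration.
Variable A : algType CC.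
Implicit Types a x y l : A.

Lemma adZ a c x : ad a (c *: x) = c *: ad a x.
Proof. by rewrite /ad scalerBr -scalerAr -scalerAl. Qed.

Lemma size_le_sumn (s : seq (nat * A)) :
  all (fun p => 0 < p.1)%N s -> (size s <= sumn (map fst s))%N.
Proof. by elim: s => //= p s IHs /andP[p_gt0 /IHs]; lia. Qed.

Lemma NCfil_prod (s : seq (nat * A)) :
  (0 < size s)%N -> all (fun p => 0 < p.1)%N s -> (forall p, p \in s -> Mser p.1 p.2) ->
  NCfil (sumn (map fst s) - size s) (\prod_(p <- s) p.2).
Proof.
move=> s_gt0 s_pos sM; apply: span_base; exists s; do 2!split => //.
by split; [have := size_le_sumn s_pos; lia | split].
Qed.

Lemma NCfil_mul i j x y : NCfil i x -> NCfil j y -> NCfil (i + j) (x * y).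
Proof.
apply: span_mul => _ _ [s1 [s1_gt0 [s1_pos [s1_sum [s1M ->]]]]]
  [s2 [s2_gt0 [s2_pos [s2_sum [s2M ->]]]]].
apply: span_base; exists (s1 ++ s2); rewrite size_cat all_cat s1_pos s2_pos big_cat.
split; first lia.
split=> //; split; first by rewrite map_cat sumn_cat s1_sum s2_sum; lia.
by split=> // p; rewrite mem_cat => /orP[/s1M|/s2M].
Qed.

Lemma Mser_NCfil i x : Mser i.+1 x -> NCfil i x.
Proof.
move=> Mx; apply: span_base; exists [:: (i.+1, x)]; rewrite big_seq1.
do 2!split => //; split; first by rewrite /= addn0 addn1.
by split=> // p; rewrite inE => /eqP ->.
Qed.

Lemma Lser_Mser i l : Lser i l -> Mser i l.
Proof. by move=> Ll; apply: span_base; exists 1, l, 1; rewrite mul1r mulr1. Qed.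

Lemma NCfil0 x : NCfil 0 x.
Proof. exact/Mser_NCfil/Lser_Mser. Qed.

Lemma NCfilMl k a x : NCfil k x -> NCfil k (a * x).
Proof. by move=> Fx; rewrite -[k]add0n; apply: NCfil_mul => //; apply: NCfil0. Qed.

Lemma NCfilMr k a x : NCfil k x -> NCfil k (x * a).
Proof. by move=> Fx; rewrite -[k]addn0; apply: NCfil_mul => //; apply: NCfil0. Qed.

Lemma Lser_ad i a l : Lser i.+1 l -> Lser i.+2 (ad a l).
Proof. by move=> Ll; apply: span_base; exists a, l. Qed.

Lemma NCfil1_ad a x : NCfil 1 (ad a x).
Proof. exact/Mser_NCfil/Lser_Mser/Lser_ad. Qed.

Lemma NCfil_ad_Mser i a x : Mser i.+1 x -> NCfil i.+1 (ad a x).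
Proof.
apply: span_linear; [exact: ad0 | exact: adD | exact: adZ |].
move=> _ [x' [l [y [Ll ->]]]]; rewrite !adMr mulrDl.
have Fl : NCfil i l by exact/Mser_NCfil/Lser_Mser.
apply: spanD; first apply: spanD.
- by apply: NCfilMr; rewrite -[i.+1]add1n; apply: NCfil_mul => //; apply: NCfil1_ad.
- by apply/Mser_NCfil/span_base; exists x', (ad a l), y; split => //; apply: Lser_ad.
- by rewrite -[i.+1]addn1; apply: NCfil_mul; [apply: NCfilMl | apply: NCfil1_ad].
Qed.

Lemma NCfil_ad k a x : NCfil k x -> NCfil k.+1 (ad a x).
Proof.
apply: span_linear; [exact: ad0 | exact: adD | exact: adZ |].
move=> _ [s [s_gt0 [s_pos [s_sum [sM ->]]]]].
elim: s k s_gt0 s_pos s_sum sM => [//|[i x'] s IHs] k _ /= /andP[i_gt0 s_pos] s_sum sM.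
have Mx' : Mser i x' by apply: (sM (i, x')); rewrite inE eqxx.
have {}sM p : p \in s -> Mser p.1 p.2 by move=> ps; apply: sM; rewrite inE ps orbT.
case: i i_gt0 Mx' s_sum => // i _ Mx' s_sum; rewrite big_cons.
case: s IHs s_pos s_sum sM => [|q s] IHs s_pos s_sum sM.
  by rewrite big_nil mulr1 (_ : k = i); [exact: NCfil_ad_Mser | move: s_sum => /=; lia].
have s_ge := size_le_sumn s_pos.
set k' := (sumn (map fst (q :: s)) - size (q :: s))%N.
have Fs := NCfil_prod (s := q :: s) isT s_pos sM.
have Fad_s := IHs k' isT s_pos (esym (subnK s_ge)) sM.
rewrite adMr; apply: spanD.
  by rewrite (_ : k.+1 = i.+1 + k')%N; [apply: NCfil_mul => //; apply: NCfil_ad_Mser | lia].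
by rewrite (_ : k.+1 = i + k'.+1)%N; [apply: NCfil_mul => //; apply: Mser_NCfil | lia].
Qed.

Lemma NCfil_iter_ad k a x : NCfil k (iter k (ad a) x).
Proof. by elim: k => [|k IHk] /=; [apply: NCfil0 | apply: NCfil_ad]. Qed.

Lemma NCfil_ad_quotr k s n x : NCfil k x -> NCfil k (ad_quotr s n x).
Proof.
elim: n x => [|n IHn] x Fx /=; first exact: span0.
by apply: spanB; [apply: NCfilMr | apply/IHn/spanB; [apply: NCfilMl | apply: NCfilMr]].
Qed.

Lemma iter_ad_eq0 N s x : (forall y, NCfil N y -> y = 0) -> iter N (ad s) x = 0.
Proof. by move=> FN0; apply/FN0/NCfil_iter_ad. Qed.

Lemma ore_of_ad_nil (S : A -> Prop) N :
  (forall s, S s -> S (s ^+ N)) -> (forall s x, iter N (ad s) x = 0) ->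
  right_ore S /\ left_ore S.
Proof.
move=> SX ad_nil; split=> a s Ss.
  by exists (ad_quotr s N a), (s ^+ N); split; [exact: SX | exact: mulrX_ad_quotr].
by exists (ad_quotl s N a), (s ^+ N); split; [exact: SX | exact: mulXr_ad_quotl].
Qed.

End NCFiltration.
Local Open Scope quotient_scope.

Section Localization.
Variable A : algType CC.
Variables (t : A) (N : nat).
Hypothesis ad_t_nil : forall x, iter N (ad t) x = 0.
Hypothesis t_nonnil : forall k, t ^+ k != 0.

(* A pair [(a, n)] stands for the right fraction [a t^-n]. *)
Local Notation frac := (A * nat)%type.
Implicit Types p q r : frac.
Implicit Types a b : A.

Lemma mul_tX_eq a i j : (i = j)%N -> a * t ^+ i = a * t ^+ j.
Proof. by move=> ->. Qed.

Lemma mul_tXX a i j : a * t ^+ i * t ^+ j = a * t ^+ (i + j).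
Proof. by rewrite -mulrA -exprD. Qed.

Definition frac_eqv p q := exists k, p.1 * t ^+ (q.2 + k) = q.1 * t ^+ (p.2 + k).

Lemma frac_eqv_refl p : frac_eqv p p. Proof. by exists 0%N. Qed.
Lemma frac_eqv_sym p q : frac_eqv p q -> frac_eqv q p.
Proof. by case=> k eq_pq; exists k. Qed.

Lemma frac_eqv_trans p q r : frac_eqv p q -> frac_eqv q r -> frac_eqv p r.
Proof.
case: p q r => [a n] [b m] [c l] [k /= eq_ab] [j /= eq_bc]; exists (m + k + j)%N => /=.
have eq_a : a * t ^+ (l + (m + k + j)) = b * t ^+ (n + k + (l + j)).
  rewrite (@mul_tX_eq a _ ((m + k) + (l + j))); last by lia.
  by rewrite -mul_tXX eq_ab mul_tXX.
have eq_c : c * t ^+ (n + (m + k + j)) = b * t ^+ (l + j + (n + k)).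
  rewrite (@mul_tX_eq c _ ((m + j) + (n + k))); last by lia.
  by rewrite -mul_tXX -eq_bc mul_tXX.
by rewrite eq_a eq_c; apply: mul_tX_eq; lia.
Qed.

Definition frac_eqvb p q : bool :=
  if excluded_middle_informative (frac_eqv p q) then true else false.

Lemma frac_eqvbP p q : reflect (frac_eqv p q) (frac_eqvb p q).
Proof. by rewrite /frac_eqvb; case: excluded_middle_informative; constructor. Qed.

Lemma frac_eqvb_refl : reflexive frac_eqvb.
Proof. by move=> p; apply/frac_eqvbP/frac_eqv_refl. Qed.

Lemma frac_eqvb_sym : symmetric frac_eqvb.
Proof. by move=> p q; apply/frac_eqvbP/frac_eqvbP => /frac_eqv_sym. Qed.

Lemma frac_eqvb_trans : transitive frac_eqvb.
Proof.
by move=> q p r /frac_eqvbP pq /frac_eqvbP qr; apply/frac_eqvbP; apply: frac_eqv_trans qr.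
Qed.

Canonical frac_eqvb_equiv := EquivRel frac_eqvb frac_eqvb_refl frac_eqvb_sym frac_eqvb_trans.

(* The dummy arguments make [loc] depend on the two hypotheses, which its ring
   instances need, so that these instances are still found after the section. *)
Definition loc : Type :=
  (fun (_ : forall x, iter N (ad t) x = 0) (_ : forall k, t ^+ k != 0) =>
     {eq_quot frac_eqvb}) ad_t_nil t_nonnil.
HB.instance Definition _ : EqQuotient _ frac_eqvb loc := EqQuotient.on loc.
HB.instance Definition _ := Choice.on loc.

Definition mkloc (p : frac) : loc := \pi_loc p.

Lemma mkloc_eq p q : frac_eqv p q -> mkloc p = mkloc q.
Proof. by move=> pq; apply/eqmodP/frac_eqvbP. Qed.

Lemma eq_mkloc p q : mkloc p = mkloc q -> frac_eqv p q.
Proof. by move=> pq; apply/frac_eqvbP/eqmodP. Qed.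

Lemma repr_mkloc p : frac_eqv (repr (mkloc p)) p.
Proof. by apply: eq_mkloc; rewrite /mkloc reprK. Qed.

Lemma mkloc_ind (P : loc -> Prop) : (forall p, P (mkloc p)) -> forall z : loc, P z.
Proof. by move=> Pp z; rewrite -(reprK z); apply: Pp. Qed.

Definition frac_add p q : frac := (p.1 * t ^+ q.2 + q.1 * t ^+ p.2, (p.2 + q.2)%N).
Definition frac_opp p : frac := (- p.1, p.2).
Definition frac_scale (c : CC) p : frac := (c *: p.1, p.2).
Definition frac_lmul a p : frac := (a * p.1, p.2).
(* [t^-1 a = (ad_quotr t N a) t^-N], because [a t^N = t (ad_quotr t N a)]. *)
Definition frac_tinvl p : frac := (ad_quotr t N p.1, (p.2 + N)%N).

Lemma frac_addC p q : frac_add p q = frac_add q p.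
Proof. by rewrite /frac_add addrC addnC. Qed.

Lemma frac_add_eqv p p' q : frac_eqv p p' -> frac_eqv (frac_add p q) (frac_add p' q).
Proof.
case: p p' q => [a n] [a' n'] [b m] [k /= eq_aa']; exists k => /=.
rewrite !mulrDl !mul_tXX; congr (_ + _); last by apply: mul_tX_eq; lia.
rewrite (@mul_tX_eq a _ ((n' + k) + (m + m))); last by lia.
rewrite -mul_tXX eq_aa' mul_tXX; apply: mul_tX_eq; lia.
Qed.

Lemma frac_opp_eqv p p' : frac_eqv p p' -> frac_eqv (frac_opp p) (frac_opp p').
Proof. by case=> k eq_pp'; exists k; rewrite /= !mulNr eq_pp'. Qed.

Lemma frac_scale_eqv c p p' : frac_eqv p p' -> frac_eqv (frac_scale c p) (frac_scale c p').
Proof. by case=> k eq_pp'; exists k; rewrite /= -!scalerAl eq_pp'. Qed.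

Lemma frac_lmul_eqv a p p' : frac_eqv p p' -> frac_eqv (frac_lmul a p) (frac_lmul a p').
Proof. by case=> k eq_pp'; exists k; rewrite /= -!mulrA eq_pp'. Qed.

Lemma mul_tN x : x * t ^+ N = t * ad_quotr t N x.
Proof. exact: mulrX_ad_quotr. Qed.

Lemma mul_tN_cancel x y : t * x = t * y -> x * t ^+ N = y * t ^+ N.
Proof.
move=> txy; apply/eqP; rewrite -subr_eq0 -mulrBl; apply/eqP.
by apply: ad_nil_mulrX_eq0; [rewrite mulrBr txy subrr|].
Qed.

Lemma frac_tinvl_eqv p p' : frac_eqv p p' -> frac_eqv (frac_tinvl p) (frac_tinvl p').
Proof.
case: p p' => [a n] [a' n'] [k /= eq_aa']; exists (k + N)%N => /=.
rewrite (@mul_tX_eq (ad_quotr t N a) _ ((n' + k + N) + N)); last by lia.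
rewrite (@mul_tX_eq (ad_quotr t N a') _ ((n + k + N) + N)); last by lia.
rewrite -[ad_quotr t N a * _]mul_tXX -[ad_quotr t N a' * _]mul_tXX; apply: mul_tN_cancel.
rewrite !mulrA -!mul_tN !mul_tXX.
rewrite (@mul_tX_eq a _ ((n' + k) + (N + N))); last by lia.
rewrite (@mul_tX_eq a' _ ((n + k) + (N + N))); last by lia.
by rewrite -[a * _]mul_tXX -[a' * _]mul_tXX eq_aa'.
Qed.

Fact lkey : unit. Proof. exact: tt. Qed.
Definition loc_zero : loc := mkloc (0, 0%N).
Definition loc_add :=
  locked_with lkey (fun x y : loc => mkloc (frac_add (repr x) (repr y))).
Definition loc_opp := locked_with lkey (fun x : loc => mkloc (frac_opp (repr x))).
Definition loc_scale :=
  locked_with lkey (fun c (x : loc) => mkloc (frac_scale c (repr x))).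
Definition lmul := locked_with lkey (fun a (x : loc) => mkloc (frac_lmul a (repr x))).
Definition tinvl := locked_with lkey (fun x : loc => mkloc (frac_tinvl (repr x))).

Lemma loc_addE p q : loc_add (mkloc p) (mkloc q) = mkloc (frac_add p q).
Proof.
rewrite [loc_add]unlock; apply: mkloc_eq.
apply: frac_eqv_trans (frac_add_eqv _ (repr_mkloc p)) _.
rewrite frac_addC [frac_add p _]frac_addC; exact: frac_add_eqv (repr_mkloc q).
Qed.

Lemma loc_oppE p : loc_opp (mkloc p) = mkloc (frac_opp p).
Proof. by rewrite [loc_opp]unlock; apply/mkloc_eq/frac_opp_eqv/repr_mkloc. Qed.

Lemma loc_scaleE c p : loc_scale c (mkloc p) = mkloc (frac_scale c p).
Proof. by rewrite [loc_scale]unlock; apply/mkloc_eq/frac_scale_eqv/repr_mkloc. Qed.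

Lemma lmulE a p : lmul a (mkloc p) = mkloc (frac_lmul a p).
Proof. by rewrite [lmul]unlock; apply/mkloc_eq/frac_lmul_eqv/repr_mkloc. Qed.

Lemma tinvlE p : tinvl (mkloc p) = mkloc (frac_tinvl p).
Proof. by rewrite [tinvl]unlock; apply/mkloc_eq/frac_tinvl_eqv/repr_mkloc. Qed.

Lemma mkloc0 n : mkloc (0, n) = loc_zero.
Proof. by apply: mkloc_eq; exists 0%N; rewrite /= !mul0r. Qed.

Lemma loc_addA : associative loc_add.
Proof.
elim/mkloc_ind => -[a n]; elim/mkloc_ind => -[b m]; elim/mkloc_ind => -[c l].
rewrite !loc_addE; congr mkloc; rewrite /frac_add /= addnA; congr pair.
rewrite !mulrDl !mul_tXX -addrA; congr (_ + _).
by congr (_ + _); apply: mul_tX_eq; lia.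
Qed.

Lemma loc_addC : commutative loc_add.
Proof. by elim/mkloc_ind => p; elim/mkloc_ind => q; rewrite !loc_addE frac_addC. Qed.

Lemma loc_add0 : left_id loc_zero loc_add.
Proof.
elim/mkloc_ind => -[a n]; rewrite /loc_zero loc_addE /frac_add /=.
by rewrite mul0r add0r expr0 mulr1 add0n.
Qed.

Lemma loc_addN : left_inverse loc_zero loc_opp loc_add.
Proof.
elim/mkloc_ind => -[a n]; rewrite loc_oppE loc_addE /frac_add /frac_opp /= mulNr addNr.
exact: mkloc0.
Qed.

HB.instance Definition _ := GRing.isZmodule.Build loc loc_addA loc_addC loc_add0 loc_addN.

Lemma addLE (x y : loc) : x + y = loc_add x y. Proof. by []. Qed.
Lemma zeroLE : (0 : loc) = loc_zero. Proof. by []. Qed.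
Lemma oppLE (x : loc) : - x = loc_opp x. Proof. by []. Qed.

Lemma loc_scaleA c d x : loc_scale c (loc_scale d x) = loc_scale (c * d) x.
Proof. by elim/mkloc_ind: x => -[a n]; rewrite !loc_scaleE /frac_scale /= scalerA. Qed.

Lemma loc_scale1 : left_id 1 loc_scale.
Proof. by elim/mkloc_ind => -[a n]; rewrite !loc_scaleE /frac_scale /= scale1r. Qed.

Lemma loc_scaleDr : right_distributive loc_scale +%R.
Proof.
move=> c; elim/mkloc_ind => -[a n]; elim/mkloc_ind => -[b m].
rewrite !addLE !loc_addE !loc_scaleE loc_addE /frac_scale /frac_add /=.
by rewrite scalerDr !scalerAl.
Qed.

Lemma loc_scaleDl x : {morph loc_scale^~ x : c d / c + d}.
Proof.
elim/mkloc_ind: x => -[a n] c d; rewrite addLE !loc_scaleE loc_addE.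
apply: mkloc_eq; exists 0%N; rewrite /frac_scale /frac_add /= -!mul_tXX -mulrDl.
by rewrite scalerDl.
Qed.

HB.instance Definition _ :=
  GRing.Zmodule_isLmodule.Build CC loc loc_scaleA loc_scale1 loc_scaleDr loc_scaleDl.

Lemma scaleLE c (x : loc) : c *: x = loc_scale c x. Proof. by []. Qed.

Lemma lmulD a (x y : loc) : lmul a (x + y) = lmul a x + lmul a y.
Proof.
elim/mkloc_ind: x => -[b n]; elim/mkloc_ind: y => -[c m].
by rewrite !addLE !loc_addE !lmulE loc_addE /frac_lmul /frac_add /= mulrDr !mulrA.
Qed.

Lemma lmulDl a b (x : loc) : lmul (a + b) x = lmul a x + lmul b x.
Proof.
elim/mkloc_ind: x => -[c n]; rewrite addLE !lmulE loc_addE; apply: mkloc_eq; exists 0%N.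
by rewrite /frac_lmul /frac_add /= !addn0 exprD mulrA !mulrDl.
Qed.

Lemma lmulM a b (x : loc) : lmul (a * b) x = lmul a (lmul b x).
Proof. by elim/mkloc_ind: x => -[c n]; rewrite !lmulE /frac_lmul /= mulrA. Qed.

Lemma lmul1 (x : loc) : lmul 1 x = x.
Proof. by elim/mkloc_ind: x => -[c n]; rewrite !lmulE /frac_lmul /= mul1r. Qed.

Lemma lmulZ a c (x : loc) : lmul a (c *: x) = c *: lmul a x.
Proof.
elim/mkloc_ind: x => -[b n]; rewrite !scaleLE loc_scaleE !lmulE loc_scaleE.
by rewrite /frac_lmul /frac_scale /= scalerAr.
Qed.

Lemma lmulZl a c (x : loc) : lmul (c *: a) x = c *: lmul a x.
Proof.
elim/mkloc_ind: x => -[b n]; rewrite !scaleLE !lmulE loc_scaleE.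
by rewrite /frac_lmul /frac_scale /= scalerAl.
Qed.

Lemma lmul_t_tinvl (x : loc) : lmul t (tinvl x) = x.
Proof.
elim/mkloc_ind: x => -[a n]; rewrite tinvlE lmulE; apply: mkloc_eq; exists 0%N.
by rewrite /frac_lmul /frac_tinvl /= -mul_tN mul_tXX; apply: mul_tX_eq; lia.
Qed.

Lemma tinvl_lmul_t (x : loc) : tinvl (lmul t x) = x.
Proof.
elim/mkloc_ind: x => -[a n]; rewrite lmulE tinvlE; apply: mkloc_eq; exists N => /=.
rewrite -!mul_tXX; apply: mul_tN_cancel; rewrite !mulrA -mul_tN !mul_tXX.
by apply: mul_tX_eq; lia.
Qed.

Lemma lmul_t_inj (x y : loc) : lmul t x = lmul t y -> x = y.
Proof. by move=> txy; rewrite -(tinvl_lmul_t x) -(tinvl_lmul_t y) txy. Qed.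

Lemma tinvlD (x y : loc) : tinvl (x + y) = tinvl x + tinvl y.
Proof. by apply: lmul_t_inj; rewrite lmulD !lmul_t_tinvl. Qed.

Lemma tinvlZ c (x : loc) : tinvl (c *: x) = c *: tinvl x.
Proof. by apply: lmul_t_inj; rewrite lmulZ !lmul_t_tinvl. Qed.

Lemma iter_tinvlD n (x y : loc) : iter n tinvl (x + y) = iter n tinvl x + iter n tinvl y.
Proof. by elim: n => //= n ->; rewrite tinvlD. Qed.

Lemma iter_tinvlZ n c (x : loc) : iter n tinvl (c *: x) = c *: iter n tinvl x.
Proof. by elim: n => //= n ->; rewrite tinvlZ. Qed.

Lemma lmul_tX_iter_tinvl n (x : loc) : lmul (t ^+ n) (iter n tinvl x) = x.
Proof.
elim: n x => [|n IHn] x; first by rewrite expr0 lmul1.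
by rewrite exprS lmulM iterSr IHn lmul_t_tinvl.
Qed.

Lemma tinvl_lmul b (x : loc) : tinvl (lmul b x) = lmul (ad_quotr t N b) (iter N tinvl x).
Proof.
by apply: lmul_t_inj; rewrite lmul_t_tinvl -lmulM -mul_tN lmulM lmul_tX_iter_tinvl.
Qed.

Lemma iter_tinvl_lmul n b (x : loc) :
  iter n tinvl (lmul b x) = lmul (iter n (ad_quotr t N) b) (iter (n * N) tinvl x).
Proof.
elim: n b x => [|n IHn] b x //=.
by rewrite IHn tinvl_lmul -iterD mulSn.
Qed.

Definition loc_one : loc := mkloc (1, 0%N).

Lemma iter_tinvl_lmul_tX n (x : loc) : iter n tinvl (lmul (t ^+ n) x) = x.
Proof.
elim: n x => [|n IHn] x; first by rewrite expr0 lmul1.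
by rewrite exprSr lmulM iterS IHn tinvl_lmul_t.
Qed.

Lemma mkloc_lmul a n : mkloc (a, n) = lmul a (iter n tinvl loc_one).
Proof.
have -> : iter n tinvl loc_one = mkloc (1, n).
  rewrite -[mkloc (1, n)](iter_tinvl_lmul_tX n) lmulE /frac_lmul /= mulr1; congr iter.
  by apply: mkloc_eq; exists 0%N; rewrite /= mul1r addn0 expr0 mulr1.
by rewrite lmulE /frac_lmul /= mulr1.
Qed.

(* [a t^-n * y := a (t^-1)^n y], so only the first factor needs a compatibility check. *)
Definition loc_mul (x y : loc) : loc := lmul (repr x).1 (iter (repr x).2 tinvl y).

Lemma loc_mul_eqv p q (y : loc) : frac_eqv p q ->
  lmul p.1 (iter p.2 tinvl y) = lmul q.1 (iter q.2 tinvl y).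
Proof.
case=> k eq_pq.
transitivity (lmul (p.1 * t ^+ (q.2 + k)) (iter (q.2 + k + p.2) tinvl y)).
  by rewrite lmulM iterD lmul_tX_iter_tinvl.
transitivity (lmul (q.1 * t ^+ (p.2 + k)) (iter (p.2 + k + q.2) tinvl y)).
  by rewrite eq_pq; congr lmul; congr iter; lia.
by rewrite lmulM iterD lmul_tX_iter_tinvl.
Qed.

Lemma loc_mulE p (y : loc) : loc_mul (mkloc p) y = lmul p.1 (iter p.2 tinvl y).
Proof. by apply: loc_mul_eqv; apply: repr_mkloc. Qed.

Lemma mkloc_mul a n b m :
  loc_mul (mkloc (a, n)) (mkloc (b, m)) = mkloc (a * iter n (ad_quotr t N) b, (n * N + m)%N).
Proof.
rewrite loc_mulE /= [mkloc (b, m)]mkloc_lmul iter_tinvl_lmul -lmulM -iterD.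
by rewrite [RHS]mkloc_lmul.
Qed.

Lemma loc_mulA : associative loc_mul.
Proof.
elim/mkloc_ind => -[a n]; elim/mkloc_ind => -[b m] z.
by rewrite mkloc_mul !loc_mulE /= iter_tinvl_lmul -lmulM -iterD.
Qed.

Lemma loc_mul1r : left_id loc_one loc_mul.
Proof. by move=> y; rewrite /loc_one loc_mulE /= lmul1. Qed.

Lemma loc_mulr1 : right_id loc_one loc_mul.
Proof. by elim/mkloc_ind => -[a n]; rewrite loc_mulE /= -mkloc_lmul. Qed.

Lemma loc_mulDl : left_distributive loc_mul +%R.
Proof.
elim/mkloc_ind => -[a n]; elim/mkloc_ind => -[b m] z.
rewrite addLE loc_addE !loc_mulE /frac_add /= lmulDl !lmulM.
have iter_nm : iter (n + m) tinvl z = iter m tinvl (iter n tinvl z) by rewrite -iterD addnC.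
have iter_mn : iter (n + m) tinvl z = iter n tinvl (iter m tinvl z) by rewrite -iterD.
by rewrite {1}iter_nm iter_mn !lmul_tX_iter_tinvl.
Qed.

Lemma loc_mulDr : right_distributive loc_mul +%R.
Proof.
by elim/mkloc_ind => -[a n] y z; rewrite !loc_mulE /= iter_tinvlD lmulD.
Qed.

Lemma loc_one_neq0 : loc_one != 0.
Proof.
apply/eqP => /eq_mkloc [k /=]; rewrite mul1r mul0r => tk0.
by have := t_nonnil (0 + k); rewrite tk0 eqxx.
Qed.

HB.instance Definition _ := GRing.Zmodule_isNzRing.Build loc
  loc_mulA loc_mul1r loc_mulr1 loc_mulDl loc_mulDr loc_one_neq0.

Lemma mulLE (x y : loc) : x * y = loc_mul x y. Proof. by []. Qed.
Lemma oneLE : (1 : loc) = loc_one. Proof. by []. Qed.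

Lemma loc_scaleAl c (x y : loc) : c *: (x * y) = (c *: x) * y.
Proof.
elim/mkloc_ind: x => -[a n].
by rewrite !mulLE !scaleLE loc_scaleE !loc_mulE /frac_scale /= lmulZl.
Qed.

HB.instance Definition _ := GRing.Lmodule_isLalgebra.Build CC loc loc_scaleAl.

Lemma loc_scaleAr c (x y : loc) : c *: (x * y) = x * (c *: y).
Proof.
by elim/mkloc_ind: x => -[a n]; rewrite !mulLE !loc_mulE /= iter_tinvlZ lmulZ.
Qed.

HB.instance Definition _ := GRing.Lalgebra_isAlgebra.Build CC loc loc_scaleAr.

End Localization.

Local Close Scope quotient_scope.

Section LocalizationMorphism.
Variable A : algType CC.
Variables (t : A) (N : nat).
Hypothesis ad_t_nil : forall x, iter N (ad t) x = 0.
Hypothesis t_nonnil : forall k, t ^+ k != 0.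
Local Notation B := (loc ad_t_nil t_nonnil).
Local Notation mkloc := (mkloc ad_t_nil t_nonnil).
Local Notation tinvl := (@tinvl A t N ad_t_nil t_nonnil).
Local Notation loc_one := (@loc_one A t N ad_t_nil t_nonnil).

Definition loc_in (a : A) : B := mkloc (a, 0%N).

Lemma loc_in_zmod : zmod_morphism loc_in.
Proof.
move=> a b; rewrite /loc_in addLE oppLE loc_oppE loc_addE /frac_add /frac_opp /=.
by rewrite !expr0 !mulr1.
Qed.

Lemma loc_in_monoid : monoid_morphism loc_in.
Proof.
by split=> // a b; rewrite /loc_in mulLE mkloc_mul /= mul0n.
Qed.

Lemma loc_in_scalable : scalable loc_in.
Proof. by move=> c a; rewrite /loc_in scaleLE loc_scaleE. Qed.

HB.instance Definition _ := GRing.isZmodMorphism.Build A B loc_in loc_in_zmod.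
HB.instance Definition _ := GRing.isMonoidMorphism.Build A B loc_in loc_in_monoid.
HB.instance Definition _ := GRing.isScalable.Build CC A B *:%R loc_in loc_in_scalable.

Definition tinv : B := mkloc (1, 1%N).

Lemma loc_in_mul a (x : B) : loc_in a * x = lmul a x.
Proof. by rewrite mulLE /loc_in loc_mulE. Qed.

Lemma mul_t_tinv : loc_in t * tinv = 1.
Proof.
rewrite loc_in_mul /tinv lmulE /frac_lmul /= mulr1 oneLE; apply: mkloc_eq.
by exists 0%N; rewrite /= !addn0 expr0 expr1 mul1r mulr1.
Qed.

Lemma mul_tinv_t : tinv * loc_in t = 1.
Proof.
rewrite mulLE /tinv loc_mulE /= lmul1.
have -> : loc_in t = lmul t 1 by rewrite -loc_in_mul mulr1.
by rewrite tinvl_lmul_t.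
Qed.

Lemma tinvX n : tinv ^+ n = iter n tinvl 1.
Proof.
elim: n => [|n IHn]; first by rewrite expr0.
by rewrite exprS IHn mulLE /tinv loc_mulE /= lmul1.
Qed.

Lemma mkloc_frac a n : mkloc (a, n) = loc_in a * tinv ^+ n.
Proof. by rewrite tinvX loc_in_mul oneLE -mkloc_lmul. Qed.

Lemma loc_ind (P : B -> Prop) : (forall a n, P (loc_in a * tinv ^+ n)) -> forall x, P x.
Proof. by move=> Pan; elim/mkloc_ind => -[a n]; rewrite mkloc_frac. Qed.

Section UniversalProperty.
Variables (C : algType CC) (f : {lrmorphism A -> C}) (u : C).
Hypotheses (tu1 : f t * u = 1) (ut1 : u * f t = 1).

Let tuX i : f t ^+ i * u ^+ i = 1. Proof. exact: exprMX_eq1. Qed.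

(* As for [loc], the dummy arguments carry the hypotheses needed by the instances. *)
Definition loc_lift : B -> C :=
  (fun (_ : f t * u = 1) (_ : u * f t = 1) (x : B) =>
     f (repr x).1 * u ^+ (repr x).2) tu1 ut1.

Lemma loc_lift_eqv p q : frac_eqv t p q -> f p.1 * u ^+ p.2 = f q.1 * u ^+ q.2.
Proof.
case=> k eq_pq.
have f_eq_pq : f p.1 * f t ^+ (q.2 + k) = f q.1 * f t ^+ (p.2 + k).
  by rewrite -!rmorphXn -!rmorphM eq_pq.
transitivity (f p.1 * f t ^+ (q.2 + k) * u ^+ (q.2 + k) * u ^+ p.2).
  by rewrite -(mulrA (f p.1)) tuX mulr1.
rewrite f_eq_pq -!mulrA -exprD; congr (_ * _).
rewrite (_ : (q.2 + k + p.2 = (p.2 + k) + q.2)%N); last by lia.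
by rewrite [u ^+ _]exprD mulrA tuX mul1r.
Qed.

Lemma loc_liftE p : loc_lift (mkloc p) = f p.1 * u ^+ p.2.
Proof. by apply: loc_lift_eqv; apply: repr_mkloc. Qed.

Lemma loc_lift_zmod : zmod_morphism loc_lift.
Proof.
elim/mkloc_ind => -[a n]; elim/mkloc_ind => -[b m].
rewrite addLE oppLE loc_oppE loc_addE !loc_liftE /frac_add /frac_opp /=.
rewrite rmorphD !rmorphM rmorphN !rmorphXn mulrDl mulNr mulNr.
congr (_ - _).
  by rewrite addnC exprD mulrA -(mulrA (f a)) tuX mulr1.
by rewrite exprD mulrA -(mulrA (f b)) tuX mulr1.
Qed.

Lemma lift_iter_ad_quotr n b : f (iter n (ad_quotr t N) b) * u ^+ (n * N) = u ^+ n * f b.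
Proof.
elim: n b => [|n IHn] b; first by rewrite mul0n !expr0 mulr1 mul1r.
rewrite iterSr mulSn addnC exprD mulrA IHn -mulrA exprSr -mulrA; congr (_ * _).
have f_tN : f t * f (ad_quotr t N b) = f b * f t ^+ N by rewrite -rmorphXn -!rmorphM mul_tN.
by rewrite -[f (ad_quotr t N b)]mul1r -ut1 -(mulrA u) f_tN -!mulrA tuX mulr1.
Qed.

Lemma loc_lift_monoid : monoid_morphism loc_lift.
Proof.
split; first by rewrite oneLE /loc_one loc_liftE /= rmorph1 mulr1.
elim/mkloc_ind => -[a n]; elim/mkloc_ind => -[b m].
rewrite mulLE mkloc_mul !loc_liftE /= rmorphM exprD -!mulrA; congr (_ * _).
by rewrite mulrA lift_iter_ad_quotr mulrA.
Qed.

Lemma loc_lift_scalable : scalable loc_lift.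
Proof.
move=> c; elim/mkloc_ind => -[a n].
by rewrite scaleLE loc_scaleE !loc_liftE /frac_scale /= linearZ /= scalerAl.
Qed.

HB.instance Definition _ := GRing.isZmodMorphism.Build B C loc_lift loc_lift_zmod.
HB.instance Definition _ := GRing.isMonoidMorphism.Build B C loc_lift loc_lift_monoid.
HB.instance Definition _ := GRing.isScalable.Build CC B C *:%R loc_lift loc_lift_scalable.

Lemma loc_lift_in a : loc_lift (loc_in a) = f a.
Proof. by rewrite /loc_in loc_liftE /= mulr1. Qed.

End UniversalProperty.

Lemma loc_universal (C : algType CC) (f : {lrmorphism A -> C}) :
  invertible (f t) ->
  (exists g : {lrmorphism B -> C}, forall a, g (loc_in a) = f a) /\
  (forall g1 g2 : {lrmorphism B -> C},
      (forall a, g1 (loc_in a) = f a) -> (forall a, g2 (loc_in a) = f a) ->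
      forall b, g1 b = g2 b).
Proof.
case=> u [tu1 ut1]; split; first by exists (loc_lift tu1 ut1); apply: loc_lift_in.
move=> g1 g2 g1f g2f; elim/loc_ind => a n; rewrite !rmorphM !rmorphXn.
have g12_tinv : g1 tinv = g2 tinv.
  apply: (@linv_eq_rinv _ (f t)); first by rewrite -(g1f t) -rmorphM mul_tinv_t rmorph1.
  by rewrite -(g2f t) -rmorphM mul_t_tinv rmorph1.
by congr (_ * _ ^+ _); [exact: etrans (g1f a) (esym (g2f a)) | exact: g12_tinv].
Qed.

End LocalizationMorphism.

Section LocalizationFiltration.
Variable A : algType CC.
Variables (t : A) (N : nat).
Hypothesis ad_t_nil : forall x, iter N (ad t) x = 0.
Hypothesis t_nonnil : forall k, t ^+ k != 0.
Local Notation B := (loc ad_t_nil t_nonnil).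
Local Notation mkloc := (mkloc ad_t_nil t_nonnil).
Local Notation loc_in := (@loc_in A t N ad_t_nil t_nonnil).
Local Notation tinv := (@tinv A t N ad_t_nil t_nonnil).

Definition locfil k (x : B) := exists a n, NCfil k a /\ x = mkloc (a, n).

Lemma locfil_zero k : locfil k 0.
Proof. by exists 0, 0%N; split; [apply: span0 | rewrite zeroLE]. Qed.

Lemma locfilD k x y : locfil k x -> locfil k y -> locfil k (x + y).
Proof.
move=> [a [n [Fa ->]]] [b [m [Fb ->]]]; rewrite addLE loc_addE.
by exists (a * t ^+ m + b * t ^+ n), (n + m)%N; split=> //; apply: spanD; apply: NCfilMr.
Qed.

Lemma locfilN k x : locfil k x -> locfil k (- x).
Proof.
by move=> [a [n [Fa ->]]]; rewrite oppLE loc_oppE; exists (- a), n; split=> //; apply: spanN.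
Qed.

Lemma locfilZ k c x : locfil k x -> locfil k (c *: x).
Proof.
by move=> [a [n [Fa ->]]]; rewrite scaleLE loc_scaleE; exists (c *: a), n; split=> //; apply: spanZ.
Qed.

Lemma locfil_span k (P : B -> Prop) :
  (forall x, P x -> locfil k x) -> forall x, span P x -> locfil k x.
Proof.
move=> Pk x; elim=> [|y /Pk //|y z _ ky _ kz|c y _ ky].
- exact: locfil_zero.
- exact: locfilD.
- exact: locfilZ.
Qed.

Lemma locfil0 x : locfil 0 x.
Proof. by elim/mkloc_ind: x => -[a n]; exists a, n; split=> //; apply: NCfil0. Qed.

Lemma locfil_in k a : NCfil k a -> locfil k (loc_in a).
Proof. by move=> Fa; exists a, 0%N. Qed.

Lemma locfil_mul i j x y : locfil i x -> locfil j y -> locfil (i + j) (x * y).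
Proof.
move=> [a [n [Fa ->]]] [b [m [Fb ->]]]; rewrite mulLE mkloc_mul.
exists (a * iter n (ad_quotr t N) b), (n * N + m)%N; split=> //.
by apply: NCfil_mul => //; elim: n => //= n IHn; apply: NCfil_ad_quotr.
Qed.

Lemma locfilMl k x y : locfil k y -> locfil k (x * y).
Proof. by move=> ky; rewrite -[k]add0n; apply: locfil_mul => //; apply: locfil0. Qed.

Lemma locfilMr k x y : locfil k x -> locfil k (x * y).
Proof. by move=> kx; rewrite -[k]addn0; apply: locfil_mul => //; apply: locfil0. Qed.

Lemma ad_in_tinv a : ad (loc_in a) tinv = tinv * loc_in (ad t a) * tinv.
Proof.
rewrite /ad rmorphB !rmorphM mulrBr mulrBl !mulrA mul_tinv_t mul1r.
by rewrite -!mulrA mul_t_tinv mulr1.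
Qed.

Lemma locfil1_ad_in_tinvX a m : locfil 1 (ad (loc_in a) (tinv ^+ m)).
Proof.
elim: m => [|m IHm]; first by rewrite expr0 ad1r; apply: locfil_zero.
rewrite exprS adMr; apply: locfilD; last exact: locfilMl.
apply: locfilMr; rewrite ad_in_tinv; apply: locfilMr; apply: locfilMl.
exact/locfil_in/NCfil1_ad.
Qed.

Lemma locfil_ad_in j a y : locfil j y -> locfil j.+1 (ad (loc_in a) y).
Proof.
move=> [b [m [Fb ->]]]; rewrite mkloc_frac adMr; apply: locfilD.
  have -> : ad (loc_in a) (loc_in b) = loc_in (ad a b) by rewrite /ad rmorphB !rmorphM.
  by apply: locfilMr; apply: locfil_in; apply: NCfil_ad.
by rewrite -[j.+1]addn1; apply: locfil_mul; [apply: locfil_in | apply: locfil1_ad_in_tinvX].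
Qed.

Lemma locfil_ad_tinv j y : locfil j y -> locfil j.+1 (ad tinv y).
Proof.
have -> : ad tinv y = - (tinv * ad (loc_in t) y * tinv).
  rewrite /ad mulrBr mulrBl !mulrA mul_tinv_t mul1r -!mulrA mul_t_tinv mulr1.
  by rewrite opprB.
by move=> ky; apply: locfilN; apply: locfilMr; apply: locfilMl; apply: locfil_ad_in.
Qed.

Lemma locfil_ad j x y : locfil j y -> locfil j.+1 (ad x y).
Proof.
move=> ky; elim/loc_ind: x => a n; rewrite adMl; apply: locfilD; last first.
  by apply: locfilMr; apply: locfil_ad_in.
apply: locfilMl; elim: n => [|n IHn]; first by rewrite expr0 ad1l; apply: locfil_zero.
by rewrite exprS adMl; apply: locfilD; [apply: locfilMl | apply: locfilMr; apply: locfil_ad_tinv].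
Qed.

Lemma Lser_locfil i x : Lser i.+1 x -> locfil i x.
Proof.
elim: i x => [|i IHi] x Lx; first exact: locfil0.
by apply: locfil_span Lx => _ [a [l [Ll ->]]]; apply/locfil_ad/IHi.
Qed.

Lemma Mser_locfil i x : Mser i.+1 x -> locfil i x.
Proof.
apply: locfil_span => _ [a [l [b [Ll ->]]]]; apply: locfilMr; apply: locfilMl.
exact: Lser_locfil.
Qed.

Lemma locfil_prod (s : seq (nat * B)) : all (fun p => 0 < p.1)%N s ->
  (forall p, p \in s -> Mser p.1 p.2) ->
  locfil (sumn (map fst s) - size s) (\prod_(p <- s) p.2).
Proof.
elim: s => [_ _|[[|i] x] s IHs] /=; first exact: locfil0.
  by [].
move=> s_pos sM; rewrite big_cons.
rewrite addSn subSS -addnBA ?size_le_sumn //.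
apply: locfil_mul; first by apply: Mser_locfil; apply: (sM (i.+1, x)); rewrite inE eqxx.
by apply: IHs => // p ps; apply: sM; rewrite inE ps orbT.
Qed.

Lemma NCfil_locfil k x : NCfil k x -> locfil k x.
Proof.
apply: locfil_span => _ [s [_ [s_pos [s_sum [sM ->]]]]].
by have := locfil_prod s_pos sM; rewrite s_sum addnK.
Qed.

Lemma locfil1X e k : locfil 1 e -> locfil k (e ^+ k).
Proof.
move=> ke; elim: k => [|k IHk]; first exact: locfil0.
by rewrite exprS -[k.+1]add1n; apply: locfil_mul.
Qed.

Hypothesis FN0 : forall x : A, NCfil N x -> x = 0.

Lemma locfilN_eq0 x : locfil N x -> x = 0.
Proof. by move=> [a [n [Fa ->]]]; rewrite (FN0 Fa) mkloc0. Qed.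

Lemma loc_NC_nilpotent : NC_nilpotent B.
Proof. by exists N => x /NCfil_locfil /locfilN_eq0. Qed.

(* [s r t^-n = 1 - m t^-n] with [m t^-n] nilpotent, and symmetrically on the left. *)
Lemma loc_in_invertible s r r' m m' n : NCfil 1 m -> NCfil 1 m' ->
  t ^+ n = s * r + m -> t ^+ n = r' * s + m' -> invertible (loc_in s).
Proof.
move=> Fm Fm' tn_sr tn_rs.
set e := loc_in m * tinv ^+ n; set e' := tinv ^+ n * loc_in m'.
have e_nil : e ^+ N = 0 by apply: locfilN_eq0; apply: locfil1X; apply: locfilMr; apply: locfil_in.
have e'_nil : e' ^+ N = 0 by apply: locfilN_eq0; apply: locfil1X; apply: locfilMl; apply: locfil_in.
have [e_inv _] := nilpotent_subr_inv e_nil.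
have [_ e'_inv] := nilpotent_subr_inv e'_nil.
have s_rinv : loc_in s * (loc_in r * tinv ^+ n * \sum_(i < N) e ^+ i) = 1.
  rewrite !mulrA -rmorphM (_ : s * r = t ^+ n - m); last by rewrite tn_sr addrK.
  by rewrite rmorphB rmorphXn mulrBl exprMX_eq1 ?mul_t_tinv.
have s_linv : (\sum_(i < N) e' ^+ i) * (tinv ^+ n * loc_in r') * loc_in s = 1.
  rewrite -!mulrA -rmorphM (_ : r' * s = t ^+ n - m'); last by rewrite tn_rs addrK.
  by rewrite rmorphB rmorphXn mulrBr exprMX_eq1 ?mul_tinv_t.
exists (loc_in r * tinv ^+ n * \sum_(i < N) e ^+ i); split=> //.
by rewrite -(linv_eq_rinv s_linv s_rinv).
Qed.

End LocalizationFiltration.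

Lemma prod_nseq (R : pzRingType) (x : R) n : \prod_(y <- nseq n x) y = x ^+ n.
Proof. by elim: n => [|n IHn]; rewrite ?big_nil ?expr0 // /= big_cons IHn exprS. Qed.

Lemma loc_fin_gen (A : algType CC) (t : A) N (ad_t_nil : forall x, iter N (ad t) x = 0)
    (t_nonnil : forall k, t ^+ k != 0) :
  fin_gen_alg A -> fin_gen_alg (loc ad_t_nil t_nonnil).
Proof.
move=> [gens A_gen].
set gensB := map (loc_in ad_t_nil t_nonnil) gens ++ [:: tinv ad_t_nil t_nonnil].
set words := fun y => exists w, {subset w <= gensB} /\ y = \prod_(g <- w) g.
exists gensB; elim/loc_ind => a n.
apply: (@span_linear _ _ words words (fun y => y * tinv ad_t_nil t_nonnil ^+ n)).
- by rewrite mul0r.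
- by move=> y z; rewrite mulrDl.
- by move=> c y; rewrite scalerAl.
- move=> _ [w [w_gens ->]]; apply: span_base; exists (w ++ nseq n (tinv ad_t_nil t_nonnil)).
  rewrite big_cat prod_nseq; split=> // g; rewrite mem_cat => /orP[/w_gens //|].
  by rewrite mem_nseq => /andP[_ /eqP ->]; rewrite mem_cat inE eqxx orbT.
apply: span_lrmorph (A_gen a) => _ [w [w_gens ->]]; apply: span_base.
exists (map (loc_in ad_t_nil t_nonnil) w); rewrite rmorph_prod big_map; split=> //.
by move=> g /mapP [g' g'w ->]; rewrite mem_cat map_f ?w_gens.
Qed.

Section Transfer.
Variables (B1 B2 : algType CC) (h : {lrmorphism B1 -> B2}).

Lemma Lser_lrmorph k l : Lser k l -> Lser k (h l).
Proof.
elim: k l => [|[|k] IHk] l //; move: l; apply: span_lrmorph => _ [a [l [Ll ->]]].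
by apply: span_base; exists (h a), (h l); split; [apply: IHk | rewrite rmorphB !rmorphM].
Qed.

Lemma Mser_lrmorph k x : Mser k x -> Mser k (h x).
Proof.
move: x; apply: span_lrmorph => _ [a [l [b [Ll ->]]]]; apply: span_base.
by exists (h a), (h l), (h b); split; [apply: Lser_lrmorph | rewrite !rmorphM].
Qed.

Lemma NCfil_lrmorph k x : NCfil k x -> NCfil k (h x).
Proof.
move: x; apply: span_lrmorph => _ [s [s_gt0 [s_pos [s_sum [sM ->]]]]]; apply: span_base.
exists (map (fun p => (p.1, h p.2)) s); rewrite size_map all_map -map_comp rmorph_prod big_map.
do 3!split=> //; split=> // p /mapP [q qs ->].
exact/Mser_lrmorph/sM.
Qed.

Lemma fin_gen_surj : (forall y, exists x, h x = y) -> fin_gen_alg B1 -> fin_gen_alg B2.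
Proof.
move=> h_surj [gens B1_gen]; exists (map h gens) => y; have [x <-] := h_surj y.
move: x (B1_gen x); apply: span_lrmorph => _ [w [w_gens ->]]; apply: span_base.
exists (map h w); rewrite rmorph_prod big_map; split=> // g /mapP [g' g'w ->].
by rewrite map_f ?w_gens.
Qed.

Lemma NC_nilpotent_inj : injective h -> NC_nilpotent B2 -> NC_nilpotent B1.
Proof.
move=> h_inj [N FN0]; exists N => x Fx; apply: h_inj; rewrite rmorph0.
exact/FN0/NCfil_lrmorph.
Qed.

End Transfer.

Lemma localization_retract (A B B' : algType CC) (S : A -> Prop)
    (phi : {lrmorphism A -> B}) (phi' : {lrmorphism A -> B'}) :
  is_localization S phi -> is_localization S phi' ->
  exists (h : {lrmorphism B -> B'}) (h' : {lrmorphism B' -> B}), cancel h' h.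
Proof.
move=> [phi_inv phi_univ] [phi'_inv phi'_univ].
have [[h h_phi] _] := phi_univ B' phi' phi'_inv.
have [[h' h'_phi'] phi'_uniq] := phi'_univ B phi phi_inv.
have [_ phi'_uniq'] := phi'_univ B' phi' phi'_inv.
exists h, h' => y; apply: (phi'_uniq' (h \o h') idfun) => // a /=.
by rewrite h'_phi' h_phi.
Qed.

Section CommutativeProducts.
Variable R : pzRingType.
Hypothesis mulC : forall x y : R, x * y = y * x.

Lemma prod_factor_mem (x : R) r : x \in r -> exists c, \prod_(g <- r) g = x * c.
Proof.
elim: r => // y r IHr; rewrite inE big_cons => /orP[/eqP ->|/IHr [c ->]].
  by exists (\prod_(g <- r) g).
by exists (y * c); rewrite mulrA (mulC y x) mulrA.
Qed.

Lemma prodX_factor_subset (gens w : seq R) : {subset w <= gens} ->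
  exists c, (\prod_(g <- gens) g) ^+ size w = (\prod_(g <- w) g) * c.
Proof.
elim: w => [|g w IHw] w_gens; first by exists 1; rewrite big_nil expr0 mulr1.
rewrite /= exprS big_cons.
have [c ->] : exists c, (\prod_(g <- gens) g) ^+ size w = (\prod_(g <- w) g) * c.
  by apply: IHw => x xw; apply: w_gens; rewrite inE xw orbT.
have [d ->] := prod_factor_mem (w_gens g (mem_head g w)).
by exists (d * c); rewrite -!mulrA; congr (_ * _); rewrite !mulrA (mulC d).
Qed.

End CommutativeProducts.

Section Proposition.
Variables (A Q : algType CC) (pi : {lrmorphism A -> Q}) (Sbar : Q -> Prop) (gens : seq Q).
Hypothesis pi_surj : forall q, exists a, pi a = q.
Hypothesis pi_ker : forall a, pi a = 0 <-> Mser 2 a.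
Hypothesis Sbar_gens : forall q,
  Sbar q <-> exists w : seq Q, {subset w <= gens} /\ q = \prod_(g <- w) g.
Local Notation S a := (Sbar (pi a)).

Lemma quotient_mulC (x y : Q) : x * y = y * x.
Proof.
have [a <-] := pi_surj x; have [b <-] := pi_surj y.
apply/eqP; rewrite -subr_eq0 -!rmorphM -rmorphB; apply/eqP/pi_ker.
apply: span_base; exists 1, (ad a b), 1; rewrite mul1r mulr1; split=> //.
exact: (Lser_ad (i := 0)).
Qed.

Lemma SbarM x y : Sbar x -> Sbar y -> Sbar (x * y).
Proof.
move=> /Sbar_gens [w1 [w1_gens ->]] /Sbar_gens [w2 [w2_gens ->]]; apply/Sbar_gens.
exists (w1 ++ w2); rewrite big_cat; split=> // g.
by rewrite mem_cat => /orP[/w1_gens|/w2_gens].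
Qed.

Lemma S_exprn s k : S s -> S (s ^+ k).
Proof.
move=> Ss; rewrite /= rmorphXn; elim: k => [|k IHk]; last by rewrite exprS; apply: SbarM.
by rewrite expr0; apply/Sbar_gens; exists [::]; rewrite big_nil.
Qed.

Variable t : A.
Hypothesis pi_t : pi t = \prod_(g <- gens) g.
Hypothesis Sbar_reg : forall s q, Sbar s -> (s * q = 0 -> q = 0) /\ (q * s = 0 -> q = 0).

Lemma S_t : S t.
Proof. by rewrite /= pi_t; apply/Sbar_gens; exists gens; split. Qed.

Lemma tX_neq0 k : t ^+ k != 0.
Proof.
apply/eqP => tk0; have := S_exprn k S_t; rewrite tk0 /= rmorph0 => Sbar0.
by have /eqP := (Sbar_reg 1 Sbar0).1 (mul0r 1); rewrite oner_eq0.
Qed.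

Lemma S_dvd_tX s : S s -> exists r m m' n,
  [/\ Mser 2 m, Mser 2 m', t ^+ n = s * r + m & t ^+ n = r * s + m'].
Proof.
move=> /Sbar_gens [w [w_gens pi_s]].
have [q pi_tX] := prodX_factor_subset quotient_mulC w_gens; have [r pi_r] := pi_surj q.
have pi_tsr : pi t ^+ size w = pi s * pi r by rewrite pi_t pi_tX pi_s pi_r.
have pi_trs : pi t ^+ size w = pi r * pi s by rewrite pi_tsr quotient_mulC.
exists r, (t ^+ size w - s * r), (t ^+ size w - r * s), (size w).
split; rewrite ?subrKC //; apply/pi_ker/eqP; rewrite rmorphB rmorphXn rmorphM subr_eq0.
  exact/eqP/pi_tsr.
exact/eqP/pi_trs.
Qed.

Variable N : nat.
Hypothesis FN0 : forall x : A, NCfil N x -> x = 0.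

Let ad_t_nil x : iter N (ad t) x = 0. Proof. exact: iter_ad_eq0. Qed.

Lemma S_invertible s : S s -> invertible (loc_in ad_t_nil tX_neq0 s).
Proof.
move=> /S_dvd_tX [r [m [m' [n [Mm Mm' tn_sr tn_rs]]]]].
exact: (loc_in_invertible ad_t_nil tX_neq0 FN0 (Mser_NCfil Mm) (Mser_NCfil Mm') tn_sr tn_rs).
Qed.

Lemma loc_is_localization : is_localization (fun a => S a) (loc_in ad_t_nil tX_neq0).
Proof.
split=> [|C f f_inv]; first exact: S_invertible.
by apply: loc_universal; apply: f_inv; apply: S_t.
Qed.

Lemma localization_fin_gen_nilpotent (B : algType CC) (phi : {lrmorphism A -> B}) :
  fin_gen_alg A -> is_localization (fun a => S a) phi -> fin_gen_alg B /\ NC_nilpotent B.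
Proof.
move=> A_fg phi_loc; have [h [h' h'K]] := localization_retract loc_is_localization phi_loc.
split; first by apply: (fin_gen_surj (h := h)) (loc_fin_gen _ _ A_fg) => y; exists (h' y).
exact: NC_nilpotent_inj (can_inj h'K) (loc_NC_nilpotent ad_t_nil tX_neq0 FN0).
Qed.

End Proposition.

Theorem proposition2p5 (A Q : algType CC) (pi : {lrmorphism A -> Q})
    (Sbar : Q -> Prop) :
  fin_gen_alg A ->
  NC_nilpotent A ->
  (* pi : A -> A / M_2(A) is the quotient map *)
  (forall q, exists a, pi a = q) ->
  (forall a, pi a = 0 <-> Mser 2 a) ->
  (* Sbar is a finitely generated multiplicative set *)
  (exists gens : seq Q, forall q,
      Sbar q <-> exists w : seq Q, {subset w <= gens} /\ q = \prod_(g <- w) g) ->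
  (* without zero divisors *)
  (forall s q, Sbar s -> (s * q = 0 -> q = 0) /\ (q * s = 0 -> q = 0)) ->
  let S := fun a => Sbar (pi a) in
  (right_ore S /\ left_ore S) /\
  (exists (B : algType CC) (phi : {lrmorphism A -> B}), is_localization S phi) /\
  (forall (B : algType CC) (phi : {lrmorphism A -> B}),
      is_localization S phi -> fin_gen_alg B /\ NC_nilpotent B).
Proof.
move=> A_fg [N FN0] pi_surj pi_ker [gens Sbar_gens] Sbar_reg S.
have [t pi_t] := pi_surj (\prod_(g <- gens) g).
split.
  apply: (ore_of_ad_nil (N := N)) => [s|s x]; first exact: S_exprn.
  exact: iter_ad_eq0.
split; first exact: ex_intro _ _ (ex_intro _ _
  (loc_is_localization pi_surj pi_ker Sbar_gens pi_t Sbar_reg FN0)).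
move=> B phi phi_loc.
exact: (localization_fin_gen_nilpotent pi_surj pi_ker Sbar_gens pi_t Sbar_reg FN0 A_fg phi_loc).
Qed.
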